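(* Let $(w_k)_{k\ge0}$ be a sequence of positive real numbers and let $\mathbb{P}$ denote the law of the vertex reinforced random walk on $\mathbb{Z}$ with weight $(w_k)_{k\ge0}$ started at $0$. If under $\mathbb{P}$ the site $0$ has positive probability to be visited only finitely many times, then for every $w=(w_k(x))_{x\in\mathbb{Z},k\ge0}\in(0,\infty)^{\mathbb{Z}\times\mathbb{N}}$ such that $w_k(x)=w_k$ for all $x\ge0$ and $k\ge0$, the probability under $\mathbb{P}_w$ that $0$ is visited only at time $0$ is positive. In particular $\mathbb{P}(X_n>0 \text{ for all } n>0)>0$.
   Context: For an environment $w=(w_k(x))_{x\in\mathbb{Z},k\ge0}$ of positive reals, $\mathbb{P}_w$ is the law of the process $(X_n)_{n\ge0}$ with $X_0=0$ and, for all $n\ge0$, on $\{X_n=x\}$, $$\mathbb{P}_w(X_{n+1}=X_n\pm1\mid\mathcal{F}_n)=\frac{w_{Z_n(x\pm1)}(x\pm1)}{w_{Z_n(x-1)}(x-1)+w_{Z_n(x+1)}(x+1)},$$ where $(\mathcal{F}_n)$ is the natural filtration of $X$ and $Z_n(y)=\#\{m\le n: X_m=y\}$. The law $\mathbb{P}$ of the vertex reinforced random walk with weight $(w_k)$ is $\mathbb{P}_w$ with $w_k(x)=w_k$ for all $x,k$. *)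

From Stdlib Require Export Reals ZArith List.
Import ListNotations.
Open Scope R_scope.

(* An environment w = (w_k(x)) : [env_w k x] is w_k(x). *)
Definition env := nat -> Z -> R.

Fixpoint cnt (y : Z) (h : list Z) : nat :=
  match h with
  | nil => 0%nat
  | a :: t => ((if Z.eq_dec a y then 1 else 0) + cnt y t)%nat
  end.

(* Given the history h = [X_0; ...; X_n] (so that cnt y h = Z_n(y)),
   probability under P_w that X_{n+1} = X_n + 1 (up = true) or
   X_n - 1 (up = false). *)
Definition step (w : env) (h : list Z) (up : bool) : R :=
  let x := last h 0%Z in
  let a := w (cnt (x + 1)%Z h) (x + 1)%Z in
  let b := w (cnt (x - 1)%Z h) (x - 1)%Z in
  (if up then a else b) / (a + b).

Definition nextpos (x : Z) (up : bool) : Z := if up then (x + 1)%Z else (x - 1)%Z.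

Fixpoint pprob (w : env) (h : list Z) (ds : list bool) : R :=
  match ds with
  | nil => 1
  | d :: t => step w h d * pprob w (h ++ [nextpos (last h 0%Z) d]) t
  end.

Fixpoint traj (x : Z) (ds : list bool) : list Z :=
  match ds with
  | nil => nil
  | d :: t => nextpos x d :: traj (nextpos x d) t
  end.

Fixpoint allds (n : nat) : list (list bool) :=
  match n with
  | O => [nil]
  | S m => map (cons true) (allds m) ++ map (cons false) (allds m)
  end.

(* P_w(E) for an event E depending on the path (X_0, ..., X_n) only, X_0 = 0 *)
Definition prob_first (w : env) (n : nat) (E : list Z -> bool) : R :=
  fold_right Rplus 0
    (map (fun ds => if E (0%Z :: traj 0%Z ds) then pprob w [0%Z] ds else 0)
         (allds n)).

(* the path p = [X_0; ...; X_n] satisfies X_m <> 0 for all N <= m <= n *)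
Definition avoid0_from (N : nat) (p : list Z) : bool :=
  forallb (fun x => negb (Z.eqb x 0)) (skipn N p).

Definition positive_after0 (p : list Z) : bool :=
  forallb (fun x => Z.ltb 0 x) (tl p).

(* the environment of the VRRW with weight (w_k) *)
Definition const_env (ws : nat -> R) : env := fun k _ => ws k.

From Stdlib Require Import Reals ZArith List Lra Lia Classical.
Import ListNotations.
Open Scope R_scope.

(* If 0 is avoided from time N on with positive probability, some fixed prefix of length N
   keeps a positive conditional probability of never visiting 0 again, and the walk then
   stays on the side of its position at time N.  The transition probabilities only depend on
   the local times at the two neighbours of the current position, so the continuation can be
   coupled with a walk started after a positive prefix having the same local times on that
   side: reflect and shift that side by 3 and fold the other one onto {1, 2}.  This gives
   P(X_n > 0 for all n > 0) > 0, and the same coupling with the identity map compares P_w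
   with P once both walks have stepped to 1, because w and (w_k) agree on [0, oo). *)

Definition indicator (E : list Z -> bool) (h : list Z) : R := if E h then 1 else 0.

Definition extend (h : list Z) (d : bool) : list Z := h ++ [nextpos (last h 0%Z) d].

Fixpoint expect (w : env) (h : list Z) (n : nat) (g : list Z -> R) : R :=
  match n with
  | O => g h
  | S n => step w h true * expect w (extend h true) n g
         + step w h false * expect w (extend h false) n g
  end.

Definition prefix_closed (E : list Z -> bool) : Prop :=
  forall h l, E (h ++ l) = true -> E h = true.

Lemma indicator_nonneg E h : 0 <= indicator E h.
Proof. unfold indicator; destruct (E h); lra. Qed.

Lemma decreasing_sum_split (A B : nat -> R) eps :
  Un_decreasing A -> Un_decreasing B -> (forall m, eps <= A m + B m) ->
  (forall m, eps / 2 <= A m) \/ (forall m, eps / 2 <= B m).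
Proof.
  intros HA HB Hsum.
  destruct (classic (forall m, eps / 2 <= A m)) as [|HnA]; [left; assumption|right].
  apply not_all_ex_not in HnA as [m1 Hm1].
  intro m2. apply Rnot_lt_le. intro Hm2.
  pose proof (decreasing_prop A m1 (Nat.max m1 m2) HA (Nat.le_max_l _ _)).
  pose proof (decreasing_prop B m2 (Nat.max m1 m2) HB (Nat.le_max_r _ _)).
  pose proof (Hsum (Nat.max m1 m2)). lra.
Qed.

Lemma fold_right_Rplus_app (l1 l2 : list R) :
  fold_right Rplus 0 (l1 ++ l2) = fold_right Rplus 0 l1 + fold_right Rplus 0 l2.
Proof. induction l1 as [|a l1 IH]; simpl; [lra|rewrite IH; lra]. Qed.

Lemma fold_right_Rplus_scale {A} (f : A -> R) c l :
  fold_right Rplus 0 (map (fun x => c * f x) l) = c * fold_right Rplus 0 (map f l).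
Proof. induction l as [|a l IH]; simpl; [ring|rewrite IH; ring]. Qed.

Section Walk.
Variable w : env.
Hypothesis w_pos : forall k x, 0 < w k x.

Lemma step_pos h d : 0 < step w h d.
Proof.
  unfold step. set (a := w _ _). set (b := w _ _).
  assert (0 < a) by apply w_pos. assert (0 < b) by apply w_pos.
  destruct d; apply Rdiv_lt_0_compat; lra.
Qed.

Lemma step_true_false h : step w h true + step w h false = 1.
Proof.
  unfold step. set (a := w _ _). set (b := w _ _).
  assert (0 < a) by apply w_pos. assert (0 < b) by apply w_pos.
  field. lra.
Qed.

Lemma step_le_1 h d : step w h d <= 1.
Proof.
  pose proof (step_pos h true); pose proof (step_pos h false).
  pose proof (step_true_false h). destruct d; lra.
Qed.

Lemma pprob_pos ds : forall h, 0 < pprob w h ds.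
Proof.
  induction ds as [|d ds IH]; intro h; simpl; [lra|].
  apply Rmult_lt_0_compat; [apply step_pos|apply IH].
Qed.

Lemma expect_nonneg g : (forall h, 0 <= g h) -> forall n h, 0 <= expect w h n g.
Proof.
  intros Hg n; induction n as [|n IH]; intro h; cbn [expect]; [apply Hg|].
  pose proof (step_pos h true); pose proof (step_pos h false).
  pose proof (IH (extend h true)); pose proof (IH (extend h false)). nra.
Qed.

Lemma expect_le g1 g2 : (forall h, g1 h <= g2 h) ->
  forall n h, expect w h n g1 <= expect w h n g2.
Proof.
  intros Hg n; induction n as [|n IH]; intro h; cbn [expect]; [apply Hg|].
  pose proof (step_pos h true); pose proof (step_pos h false).
  pose proof (IH (extend h true)); pose proof (IH (extend h false)). nra.
Qed.

Lemma expect_add g n m : forall h, expect w h (n + m) g = expect w h n (fun h' => expect w h' m g).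
Proof. induction n as [|n IH]; intro h; cbn [expect Nat.add]; [reflexivity|now rewrite !IH]. Qed.

Lemma expect_vanish g n : forall h, (forall l, g (h ++ l) = 0) -> expect w h n g = 0.
Proof.
  induction n as [|n IH]; intros h Hg; cbn [expect].
  - rewrite <- (app_nil_r h). apply Hg.
  - unfold extend. rewrite !IH; [ring| |]; intro l; rewrite <- app_assoc; apply Hg.
Qed.

Lemma expect_step_ge g (Hg : forall h, 0 <= g h) h d n :
  step w h d * expect w (extend h d) n g <= expect w h (S n) g.
Proof.
  cbn [expect]. pose proof (step_pos h (negb d)).
  pose proof (expect_nonneg g Hg n (extend h (negb d))). destruct d; simpl in *; nra.
Qed.

Lemma expect_indicator_one_le E (HE : prefix_closed E) h :
  expect w h 1 (indicator E) <= indicator E h.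
Proof.
  cbn [expect]. pose proof (step_pos h true); pose proof (step_pos h false).
  pose proof (step_true_false h).
  unfold indicator. destruct (E h) eqn:Eh.
  - destruct (E (extend h true)), (E (extend h false)); nra.
  - destruct (E (extend h true)) eqn:Et; [apply HE in Et; congruence|].
    destruct (E (extend h false)) eqn:Ef; [apply HE in Ef; congruence|]. lra.
Qed.

Lemma expect_indicator_decreasing E (HE : prefix_closed E) h :
  Un_decreasing (fun n => expect w h n (indicator E)).
Proof.
  intro n. rewrite <- Nat.add_1_r, expect_add.
  apply expect_le. intro. apply expect_indicator_one_le, HE.
Qed.

Lemma pprob_mul_expect_le g (Hg : forall h, 0 <= g h) ds : forall h m,
  pprob w h ds * expect w (h ++ traj (last h 0%Z) ds) m g <= expect w h (length ds + m) g.
Proof.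
  induction ds as [|d ds IH]; intros h m; cbn [pprob traj length Nat.add].
  - rewrite app_nil_r. lra.
  - specialize (IH (extend h d) m). unfold extend in *.
    rewrite last_last, <- app_assoc in IH. cbn [app] in IH.
    pose proof (expect_step_ge g Hg h d (length ds + m)).
    pose proof (step_pos h d). unfold extend in *. nra.
Qed.

Lemma sum_paths_expect (E : list Z -> bool) n : forall h,
  fold_right Rplus 0
    (map (fun ds : list bool => if E (h ++ traj (last h 0%Z) ds) then pprob w h ds else 0) (allds n))
  = expect w h n (indicator E).
Proof.
  induction n as [|n IH]; intro h; cbn [allds expect map fold_right traj].
  - rewrite app_nil_r. unfold indicator. cbn [pprob]. destruct (E h); ring.
  - rewrite map_app, fold_right_Rplus_app, !map_map, <- !IH, <- !fold_right_Rplus_scale.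
    unfold extend. f_equal; f_equal; apply map_ext; intro ds; cbn [traj pprob];
      rewrite last_last, <- app_assoc; destruct (E _); ring.
Qed.

Lemma prob_first_expect n E : prob_first w n E = expect w [0%Z] n (indicator E).
Proof. unfold prob_first. rewrite <- sum_paths_expect. reflexivity. Qed.

(* Descend the tree of histories, keeping a child that carries half of the bound for all [m]
   at once; monotonicity in [m] is what makes such a child exist. *)
Lemma good_prefix (phi : list Z -> nat -> R)
  (phi_nonneg : forall h m, 0 <= phi h m) (phi_decreasing : forall h, Un_decreasing (phi h)) :
  forall n h eps, 0 < eps -> (forall m, eps <= expect w h n (fun h' => phi h' m)) ->
  exists ds c, length ds = n /\ 0 < c /\ forall m, c <= phi (h ++ traj (last h 0%Z) ds) m.
Proof.
  induction n as [|n IH]; intros h eps Heps Hexp.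
  - exists nil, eps. cbn. rewrite app_nil_r. auto.
  - set (child := fun (d : bool) (m : nat) => expect w (extend h d) n (fun h' => phi h' m)).
    assert (child_decreasing : forall d, Un_decreasing (child d)).
    { intros d m. apply expect_le. intro. apply phi_decreasing. }
    assert (Hsum : forall m, eps <= child true m + child false m).
    { intro m. specialize (Hexp m). cbn [expect] in Hexp.
      pose proof (step_le_1 h true); pose proof (step_le_1 h false).
      pose proof (expect_nonneg _ (fun h' => phi_nonneg h' m) n (extend h true)).
      pose proof (expect_nonneg _ (fun h' => phi_nonneg h' m) n (extend h false)).
      unfold child. nra. }
    assert (Hd : exists d, forall m, eps / 2 <= child d m).
    { destruct (decreasing_sum_split _ _ _ (child_decreasing true) (child_decreasing false) Hsum);
        eauto. }
    destruct Hd as [d Hd].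
    destruct (IH (extend h d) (eps / 2)) as [ds [c [Hlen [Hc Hphi]]]]; [lra|exact Hd|].
    exists (d :: ds), c. split; [cbn; auto|split; [assumption|]].
    intro m. specialize (Hphi m). unfold extend in Hphi.
    rewrite last_last, <- app_assoc in Hphi. exact Hphi.
Qed.

End Walk.

Lemma cnt_app z l1 l2 : cnt z (l1 ++ l2) = (cnt z l1 + cnt z l2)%nat.
Proof. induction l1 as [|a l1 IH]; simpl; [reflexivity|rewrite IH; lia]. Qed.

Section Mirror.
Variables w1 w2 : env.
Hypothesis w2_pos : forall k x, 0 < w2 k x.
Variables sg s : Z.
Hypothesis sg_unit : sg = 1%Z \/ sg = (-1)%Z.
Hypothesis s_nonneg : (0 <= s)%Z.
Hypothesis w_mirror : forall k z, (0 <= sg * z)%Z -> w1 k z = w2 k (s + sg * z)%Z.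

(* Around the current position, [H] is the image of [h] under z |-> s + sg z, so the next
   steps of both walks have the same law. *)
Definition mirrored (h H : list Z) : Prop :=
  (1 <= sg * last h 0)%Z /\ last H 0%Z = (s + sg * last h 0)%Z /\
  forall z, (0 <= sg * z)%Z -> cnt z h = cnt (s + sg * z)%Z H.

Definition mirror_move (d : bool) : bool := if Z.eqb sg 1 then d else negb d.

Lemma step_mirror h H d : mirrored h H -> step w1 h d = step w2 H (mirror_move d).
Proof.
  intros [Hx [Hlast Hcnt]]. unfold step, mirror_move. rewrite Hlast.
  set (x := last h 0%Z) in *.
  rewrite !w_mirror, !Hcnt by lia.
  destruct sg_unit as [-> | ->]; cbn [Z.eqb Pos.eqb negb].
  - replace (s + 1 * (x + 1))%Z with (s + 1 * x + 1)%Z by lia.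
    replace (s + 1 * (x - 1))%Z with (s + 1 * x - 1)%Z by lia.
    reflexivity.
  - replace (s + -1 * (x + 1))%Z with (s + -1 * x - 1)%Z by lia.
    replace (s + -1 * (x - 1))%Z with (s + -1 * x + 1)%Z by lia.
    destruct d; cbn; rewrite Rplus_comm; reflexivity.
Qed.

Lemma mirrored_extend h H d : mirrored h H -> nextpos (last h 0%Z) d <> 0%Z ->
  mirrored (extend h d) (extend H (mirror_move d)).
Proof.
  intros [Hx [Hlast Hcnt]] Hnext. unfold extend, mirrored. rewrite !last_last, Hlast.
  unfold mirror_move. set (x := last h 0%Z) in *.
  assert (Hmove : nextpos (s + sg * x) (if Z.eqb sg 1 then d else negb d)
                  = (s + sg * nextpos x d)%Z).
  { destruct sg_unit as [-> | ->], d; cbn [Z.eqb Pos.eqb negb nextpos]; lia. }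
  rewrite Hmove. repeat split.
  - destruct sg_unit as [-> | ->], d; cbn [nextpos] in *; lia.
  - intros z Hz. rewrite !cnt_app, <- Hcnt by exact Hz. cbn [cnt].
    destruct (Z.eq_dec (nextpos x d) z), (Z.eq_dec (s + sg * nextpos x d) (s + sg * z));
      destruct sg_unit; lia.
Qed.

Lemma mirrored_last_pos h H : mirrored h H -> (0 < last H 0)%Z.
Proof. intros [Hx [Hlast _]]. lia. Qed.

Variables E1 E2 : list Z -> bool.
Variable L : nat.
Hypothesis E1_prefix_closed : prefix_closed E1.
Hypothesis E1_app_0 : forall h, (L <= length h)%nat -> E1 (h ++ [0%Z]) = false.
Hypothesis E2_app_pos : forall H a, H <> nil -> (0 < a)%Z -> E2 H = true -> E2 (H ++ [a]) = true.

(* Coupling: the mirrored walk moves in lockstep until the original one returns to 0. *)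
Lemma expect_mirror_le m : forall h H,
  mirrored h H -> (L <= length h)%nat -> (E1 h = true -> E2 H = true) ->
  expect w1 h m (indicator E1) <= expect w2 H m (indicator E2).
Proof.
  induction m as [|m IH]; intros h H Hmir HL HE; cbn [expect].
  - unfold indicator. destruct (E1 h); [rewrite HE by reflexivity|destruct (E2 H)]; lra.
  - assert (Hchild : forall d, expect w1 (extend h d) m (indicator E1)
                               <= expect w2 (extend H (mirror_move d)) m (indicator E2)).
    { intro d. destruct (Z.eq_dec (nextpos (last h 0%Z) d) 0) as [Hz|Hz].
      - rewrite expect_vanish.
        + apply expect_nonneg; [exact w2_pos|]. intro; apply indicator_nonneg.
        + intro l. unfold indicator, extend. rewrite Hz.
          destruct (E1 ((h ++ [0%Z]) ++ l)) eqn:E; [|reflexivity].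
          apply E1_prefix_closed in E. rewrite E1_app_0 in E by exact HL. discriminate.
      - pose proof (mirrored_extend h H d Hmir Hz) as Hmir'.
        apply IH; [exact Hmir'| unfold extend; rewrite length_app; cbn; lia|].
        intro HE1. apply E1_prefix_closed, HE in HE1. unfold extend.
        apply E2_app_pos; [| |exact HE1].
        + intros ->. pose proof (mirrored_last_pos _ _ Hmir). cbn in *. lia.
        + pose proof (mirrored_last_pos _ _ Hmir') as Hpos. unfold extend in Hpos.
          rewrite last_last in Hpos. exact Hpos. }
    rewrite !(step_mirror h H _ Hmir).
    pose proof (Hchild true); pose proof (Hchild false).
    pose proof (step_pos w2 w2_pos H (mirror_move true)).
    pose proof (step_pos w2 w2_pos H (mirror_move false)).
    unfold mirror_move in *. destruct (Z.eqb sg 1); cbn [negb] in *; nra.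
Qed.

End Mirror.

Lemma avoid0_from_prefix_closed N : prefix_closed (avoid0_from N).
Proof.
  intros h l H. unfold avoid0_from in *. rewrite skipn_app, forallb_app in H.
  apply andb_prop in H. tauto.
Qed.

Lemma avoid0_from_app_0 N h : (N <= length h)%nat -> avoid0_from N (h ++ [0%Z]) = false.
Proof.
  intro Hl. unfold avoid0_from. rewrite skipn_app, forallb_app.
  replace (N - length h)%nat with 0%nat by lia. cbn. apply Bool.andb_false_r.
Qed.

Lemma avoid0_from_app_pos N h a : (N <= length h)%nat -> (0 < a)%Z ->
  avoid0_from N h = true -> avoid0_from N (h ++ [a]) = true.
Proof.
  intros Hl Ha Hh. unfold avoid0_from in *. rewrite skipn_app, forallb_app, Hh.
  replace (N - length h)%nat with 0%nat by lia. cbn.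
  destruct (Z.eqb_spec a 0); [lia|reflexivity].
Qed.

Lemma skipn_length_S {A} N (l : list A) d : length l = S N -> skipn N l = [last l d].
Proof.
  revert l. induction N as [|N IH]; intros l Hl.
  - destruct l as [|a [|b t]]; cbn in *; [lia|reflexivity|lia].
  - destruct l as [|a t]; cbn in Hl; [lia|].
    cbn [skipn]. rewrite (IH t) by lia. destruct t; cbn in Hl; [lia|reflexivity].
Qed.

Lemma avoid0_from_last N h : length h = S N -> avoid0_from N h = true -> last h 0%Z <> 0%Z.
Proof.
  intros Hl Hh. unfold avoid0_from in Hh. rewrite (skipn_length_S N h 0%Z Hl) in Hh.
  cbn in Hh. apply Z.eqb_neq. destruct (Z.eqb _ 0); [discriminate|reflexivity].
Qed.

Lemma positive_after0_prefix_closed : prefix_closed positive_after0.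
Proof.
  intros [|a h] l H; [reflexivity|].
  unfold positive_after0 in *. cbn in *. rewrite forallb_app in H.
  apply andb_prop in H. tauto.
Qed.

Lemma positive_after0_app_0 h : h <> nil -> positive_after0 (h ++ [0%Z]) = false.
Proof.
  destruct h as [|a h]; [contradiction|intros _].
  unfold positive_after0. cbn. rewrite forallb_app. cbn. apply Bool.andb_false_r.
Qed.

Lemma positive_after0_app_pos h a : h <> nil -> (0 < a)%Z ->
  positive_after0 h = true -> positive_after0 (h ++ [a]) = true.
Proof.
  destruct h as [|b h]; [contradiction|intros _ Ha Hh].
  unfold positive_after0 in *. cbn in *. rewrite forallb_app, Hh. cbn.
  destruct (Z.ltb_spec 0 a); [reflexivity|lia].
Qed.

(* Shifts [0, oo) to [3, oo) and folds the negative half-line onto {1, 2}, keeping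
   nearest-neighbour steps. *)
Definition fold_pos (z : Z) : Z := if Z.leb 0 z then (3 + z)%Z else (1 + z mod 2)%Z.

Lemma fold_pos_nearest z z' : (z' = z + 1 \/ z' = z - 1)%Z ->
  (fold_pos z' = fold_pos z + 1 \/ fold_pos z' = fold_pos z - 1)%Z.
Proof.
  intro Hz. unfold fold_pos.
  pose proof (Z.mod_pos_bound z 2 ltac:(lia)). pose proof (Z.mod_pos_bound z' 2 ltac:(lia)).
  pose proof (Z_div_mod_eq_full z 2). pose proof (Z_div_mod_eq_full z' 2).
  destruct (Z.leb_spec 0 z), (Z.leb_spec 0 z'); lia.
Qed.

Lemma fold_pos_ge1 z : (1 <= fold_pos z)%Z.
Proof.
  unfold fold_pos. pose proof (Z.mod_pos_bound z 2 ltac:(lia)).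
  destruct (Z.leb_spec 0 z); lia.
Qed.

Lemma fold_pos_nonneg z : (0 <= z)%Z -> fold_pos z = (3 + z)%Z.
Proof. intro Hz. unfold fold_pos. destruct (Z.leb_spec 0 z); lia. Qed.

Lemma fold_pos_eq_nonneg y z : (0 <= z)%Z -> fold_pos y = (3 + z)%Z -> y = z.
Proof.
  intros Hz. unfold fold_pos. pose proof (Z.mod_pos_bound y 2 ltac:(lia)).
  destruct (Z.leb_spec 0 y); lia.
Qed.

Lemma traj_map (f : Z -> Z)
  (f_nearest : forall z z', (z' = z + 1 \/ z' = z - 1)%Z -> (f z' = f z + 1 \/ f z' = f z - 1)%Z)
  ds : forall x, exists ds', traj (f x) ds' = map f (traj x ds).
Proof.
  induction ds as [|d ds IH]; intro x; [exists nil; reflexivity|].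
  destruct (IH (nextpos x d)) as [ds' Hds'].
  assert (Hstep : (f (nextpos x d) = f x + 1 \/ f (nextpos x d) = f x - 1)%Z)
    by (apply f_nearest; destruct d; cbn; lia).
  destruct Hstep as [Hup|Hdown]; [exists (true :: ds')|exists (false :: ds')];
    cbn [traj map nextpos]; rewrite <- ?Hup, <- ?Hdown, Hds'; reflexivity.
Qed.

Lemma cnt_map (f : Z -> Z) z (Hf : forall y, f y = f z -> y = z) l :
  cnt (f z) (map f l) = cnt z l.
Proof.
  induction l as [|a l IH]; cbn; [reflexivity|]. rewrite IH.
  destruct (Z.eq_dec (f a) (f z)) as [E|E], (Z.eq_dec a z); subst; auto.
  - apply Hf in E. contradiction.
  - congruence.
Qed.

Lemma last_app_map (f : Z -> Z) l1 l d : l <> nil -> last (l1 ++ map f l) d = f (last l 0%Z).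
Proof.
  intro Hl. rewrite (app_removelast_last 0%Z Hl) at 1.
  rewrite map_app, app_assoc. apply last_last.
Qed.

Lemma length_traj ds : forall x, length (traj x ds) = length ds.
Proof. induction ds as [|d ds IH]; intro x; cbn; [reflexivity|now rewrite IH]. Qed.

Lemma positive_mirror_prefix sg ds : (sg = 1 \/ sg = -1)%Z ->
  (1 <= sg * last (0%Z :: traj 0 ds) 0)%Z ->
  exists ds', mirrored sg 3 (0%Z :: traj 0 ds) ([0%Z; 1%Z] ++ traj 1 ds')
           /\ positive_after0 ([0%Z; 1%Z] ++ traj 1 ds') = true.
Proof.
  intros Hsg Hx.
  set (h := 0%Z :: traj 0 ds) in *.
  set (F := fun y => fold_pos (sg * y)).
  assert (F_nearest : forall z z', (z' = z + 1 \/ z' = z - 1)%Z ->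
                                   (F z' = F z + 1 \/ F z' = F z - 1)%Z).
  { intros z z' Hz. apply fold_pos_nearest. destruct Hsg as [-> | ->]; lia. }
  destruct (traj_map F F_nearest ds 0) as [ds' Hds'].
  replace (F 0%Z) with 3%Z in Hds' by (unfold F; rewrite Z.mul_0_r; reflexivity).
  exists (true :: true :: ds').
  replace ([0%Z; 1%Z] ++ traj 1 (true :: true :: ds')) with ([0%Z; 1%Z; 2%Z] ++ map F h)
    by (cbn; rewrite <- Hds'; unfold F; rewrite Z.mul_0_r; reflexivity).
  split; [split; [exact Hx|split]|].
  - rewrite last_app_map by discriminate. apply fold_pos_nonneg. lia.
  - intros z Hz. rewrite cnt_app.
    assert (Hsmall : cnt (3 + sg * z) [0%Z; 1%Z; 2%Z] = 0%nat).
    { cbn [cnt]. destruct (Z.eq_dec 0 (3 + sg * z)), (Z.eq_dec 1 (3 + sg * z)),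
             (Z.eq_dec 2 (3 + sg * z)); lia. }
    rewrite Hsmall, <- (fold_pos_nonneg _ Hz).
    symmetry. apply (cnt_map F z).
    intros y Hy. unfold F in Hy. rewrite (fold_pos_nonneg _ Hz) in Hy.
    apply fold_pos_eq_nonneg in Hy; [|exact Hz]. destruct Hsg as [-> | ->]; lia.
  - unfold positive_after0. apply forallb_forall. intros y Hy.
    destruct Hy as [<- | [<- | Hy]]; [reflexivity|reflexivity|].
    apply in_map_iff in Hy as [y' [<- _]].
    apply Z.ltb_lt. pose proof (fold_pos_ge1 (sg * y')). unfold F. lia.
Qed.

Lemma positive_after0_lower_bound ws (hws : forall k, 0 < ws k) :
  (exists (N : nat) (eps : R), 0 < eps /\
     forall M : nat, eps <= prob_first (const_env ws) M (avoid0_from N)) ->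
  exists eps, 0 < eps /\
    forall n, eps <= expect (const_env ws) [0%Z; 1%Z] n (indicator positive_after0).
Proof.
  intros [N [eps [Heps Hrec]]].
  set (c := const_env ws).
  assert (c_pos : forall k x, 0 < c k x) by (intros; apply hws).
  set (phi := fun h m => expect c h m (indicator (avoid0_from N))).
  destruct (good_prefix c c_pos phi
              (fun h m => expect_nonneg c c_pos _ (indicator_nonneg _) m h)
              (fun h => expect_indicator_decreasing c c_pos _ (avoid0_from_prefix_closed N) h)
              N [0%Z] eps Heps) as [ds [c0 [Hlen [Hc0 Hgood]]]].
  { intro m. unfold phi. rewrite <- expect_add, <- prob_first_expect. apply Hrec. }
  cbn [last app] in Hgood. set (h := 0%Z :: traj 0 ds) in *.
  assert (Havoid : avoid0_from N h = true).
  { specialize (Hgood 0%nat). unfold phi, indicator in Hgood. cbn [expect] in Hgood.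
    destruct (avoid0_from N h); [reflexivity|lra]. }
  assert (Hlen_h : length h = S N) by (cbn; rewrite length_traj; congruence).
  pose proof (avoid0_from_last N h Hlen_h Havoid) as Hx0.
  set (sg := if Z.ltb 0 (last h 0%Z) then 1%Z else (-1)%Z).
  assert (Hsg : sg = 1%Z \/ sg = (-1)%Z) by (unfold sg; destruct (Z.ltb _ _); auto).
  assert (Hx : (1 <= sg * last h 0%Z)%Z) by (unfold sg; destruct (Z.ltb_spec 0 (last h 0%Z)); lia).
  destruct (positive_mirror_prefix sg ds Hsg Hx) as [ds' [Hmir Hpos]].
  exists (pprob c [0%Z; 1%Z] ds' * c0).
  split; [apply Rmult_lt_0_compat; [apply pprob_pos|]; assumption|intro n].
  pose proof (expect_mirror_le c c c_pos sg 3 Hsg ltac:(lia) (fun _ _ _ => eq_refl)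
                _ _ N (avoid0_from_prefix_closed N) (avoid0_from_app_0 N)
                positive_after0_app_pos n h _ Hmir ltac:(lia) (fun _ => Hpos)) as Hcouple.
  pose proof (pprob_mul_expect_le c c_pos _ (indicator_nonneg positive_after0) ds'
                [0%Z; 1%Z] n) as Hpath.
  pose proof (decreasing_prop _ n (length ds' + n)
                (expect_indicator_decreasing c c_pos _ positive_after0_prefix_closed
                   [0%Z; 1%Z]) ltac:(lia)).
  pose proof (Hgood n). pose proof (pprob_pos c c_pos ds' [0%Z; 1%Z]).
  cbn [last] in Hpath. unfold phi in *. nra.
Qed.

Lemma expect_positive_le_avoid0 ws w (w_pos : forall k x, 0 < w k x)
  (w_eq : forall k x, (0 <= x)%Z -> w k x = ws k) n :
  expect (const_env ws) [0%Z; 1%Z] n (indicator positive_after0)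
  <= expect w [0%Z; 1%Z] n (indicator (avoid0_from 1)).
Proof.
  apply (expect_mirror_le (const_env ws) w w_pos 1 0 (or_introl eq_refl) (Z.le_refl 0))
    with (L := 1%nat).
  - intros k z Hz. rewrite w_eq by lia. reflexivity.
  - exact positive_after0_prefix_closed.
  - intros h Hh. apply positive_after0_app_0. destruct h; cbn in Hh; [lia|discriminate].
  - intros H a HH. apply avoid0_from_app_pos. destruct H; [contradiction|cbn; lia].
  - split; [cbn; lia|split; [reflexivity|]].
    intros z _. now rewrite Z.mul_1_l, Z.add_0_l.
  - cbn. lia.
  - reflexivity.
Qed.

Lemma step_up_mul_expect_le w (w_pos : forall k x, 0 < w k x) E (HE : prefix_closed E) n :
  step w [0%Z] true * expect w [0%Z; 1%Z] n (indicator E) <= expect w [0%Z] n (indicator E).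
Proof.
  eapply Rle_trans.
  - exact (expect_step_ge w w_pos _ (indicator_nonneg E) [0%Z] true n).
  - apply expect_indicator_decreasing; assumption.
Qed.

Theorem lemma2p1 (ws : nat -> R) (hws : forall k, 0 < ws k) :
  (exists (N : nat) (eps : R), 0 < eps /\
     forall M : nat, eps <= prob_first (const_env ws) M (avoid0_from N)) ->
  (forall w : env,
     (forall k x, 0 < w k x) ->
     (forall k x, (0 <= x)%Z -> w k x = ws k) ->
     exists eps : R, 0 < eps /\
       forall n : nat, eps <= prob_first w n (avoid0_from 1))
  /\
  (exists eps : R, 0 < eps /\
     forall n : nat, eps <= prob_first (const_env ws) n positive_after0).
Proof.
  intro Hrec.
  destruct (positive_after0_lower_bound ws hws Hrec) as [eps [Heps Hbound]].
  assert (c_pos : forall k x, 0 < const_env ws k x) by (intros; apply hws).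
  split.
  - intros w w_pos w_eq.
    exists (step w [0%Z] true * eps).
    split; [apply Rmult_lt_0_compat; [apply step_pos|]; assumption|intro n].
    rewrite prob_first_expect.
    eapply Rle_trans; [|apply step_up_mul_expect_le, avoid0_from_prefix_closed; exact w_pos].
    apply Rmult_le_compat_l; [apply Rlt_le, step_pos, w_pos|].
    eapply Rle_trans; [apply Hbound|apply expect_positive_le_avoid0; assumption].
  - exists (step (const_env ws) [0%Z] true * eps).
    split; [apply Rmult_lt_0_compat; [apply step_pos|]; assumption|intro n].
    rewrite prob_first_expect.
    eapply Rle_trans; [|apply step_up_mul_expect_le, positive_after0_prefix_closed; exact c_pos].
    apply Rmult_le_compat_l; [apply Rlt_le, step_pos, c_pos|apply Hbound].
Qed.
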